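(* Let $G$ be a connected graph with infinitely many nodes. Then the enlargement ${}^{*}G$ has either exactly one galaxy (its principal galaxy) or infinitely many galaxies.
   Context: Conventions. $G=\{X,B\}$ is a graph whose branches are two-element subsets of $X$, and $d$ is the graph distance. Fix a free ultrafilter $\mathcal F$ on $\mathbb N$. Hypernodes and enlargement. Hypernodes are classes $[x_n]$ of node sequences, with two sequences identified when they agree on a set in $\mathcal F$. A standard hypernode is the class of a constant sequence. ${}^{*}G$ consists of the hypernodes and the hyperbranches $[\{x_n,y_n\}]$ with $\{n:\{x_n,y_n\}\in B\}\in\mathcal F$. Galaxies. Hypernodes $[x_n]$ and $[y_n]$ are limitedly distant if $\{n:d(x_n,y_n)\le k\}\in\mathcal F$ for some $k\in\mathbb N$. Galaxies are the classes of this equivalence relation, together with the hyperbranches between their hypernodes. The principal galaxy contains the standard hypernodes. *)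

From Stdlib Require Import List.

(* A graph G = {X, B}: nodes of type X, branches given by a symmetric,
   irreflexive adjacency relation (branches are two-element subsets). *)
Definition is_graph {X : Type} (adj : X -> X -> Prop) : Prop :=
  (forall x y, adj x y -> adj y x) /\ (forall x, ~ adj x x).

(* [within adj k x y] : there is a walk of length at most k from x to y,
   i.e. the graph distance satisfies d(x,y) <= k. *)
Inductive within {X : Type} (adj : X -> X -> Prop) : nat -> X -> X -> Prop :=
| within_refl : forall k x, within adj k x x
| within_step : forall k x y z, adj x y -> within adj k y z -> within adj (S k) x z.

Definition connected {X : Type} (adj : X -> X -> Prop) : Prop :=
  forall x y : X, exists k, within adj k x y.

Definition infinite_type (X : Type) : Prop :=
  ~ exists l : list X, forall x : X, In x l.

Definition free_ultrafilter (F : (nat -> Prop) -> Prop) : Prop :=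
  F (fun _ => True) /\
  ~ F (fun _ => False) /\
  (forall A B : nat -> Prop, (forall n, A n -> B n) -> F A -> F B) /\
  (forall A B : nat -> Prop, F A -> F B -> F (fun n => A n /\ B n)) /\
  (forall A : nat -> Prop, F A \/ F (fun n => ~ A n)) /\
  (forall m : nat, F (fun n => n <> m)).

(* Hypernodes are represented by node sequences nat -> X (two sequences
   represent the same hypernode iff they agree on a set in F). *)
Definition same_hypernode {X : Type} (F : (nat -> Prop) -> Prop)
  (x y : nat -> X) : Prop := F (fun n => x n = y n).

Definition standard {X : Type} (s : X) : nat -> X := fun _ => s.

Definition lim_dist {X : Type} (adj : X -> X -> Prop)
  (F : (nat -> Prop) -> Prop) (x y : nat -> X) : Prop :=
  exists k : nat, F (fun n => within adj k (x n) (y n)).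

(* ^*G has exactly one galaxy, the principal one: every hypernode lies in
   the galaxy of the standard hypernodes. *)
Definition only_principal_galaxy {X : Type} (adj : X -> X -> Prop)
  (F : (nat -> Prop) -> Prop) : Prop :=
  forall x : nat -> X, exists s : X, lim_dist adj F x (standard s).

Definition infinitely_many_galaxies {X : Type} (adj : X -> X -> Prop)
  (F : (nat -> Prop) -> Prop) : Prop :=
  exists g : nat -> (nat -> X),
    forall i j : nat, i <> j -> ~ lim_dist adj F (g i) (g j).

From Stdlib Require Import Arith Lia Classical IndefiniteDescription.

(* If some hypernode [x] is not limitedly distant from a standard node [s], then
   d(s, x_n) is unlimited along F.  Choose geodesics from [s] to [x_n] and let
   [g_i] be the hypernode whose n-th node lies on the geodesic at distance
   d(s, x_n) / 2^i from [s].  For i < j, reaching [x_n] through [g_j] and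
   [g_i] along the geodesic shows d(g_i, g_j) >= d(s, x_n) / 2^(i+1), which is
   unlimited; so the [g_i] lie in pairwise distinct galaxies. *)

Section Walks.

Variables (X : Type) (adj : X -> X -> Prop).
Hypothesis adj_sym : forall x y, adj x y -> adj y x.

Lemma within_weaken a b x y : a <= b -> within adj a x y -> within adj b x y.
Proof.
  intros Hab H; revert b Hab; induction H as [|k x y z Hxy _ IH]; intros b Hb.
  - apply within_refl.
  - destruct b as [|b]; [lia|].
    apply within_step with y; [exact Hxy | apply IH; lia].
Qed.

Lemma within_trans a b x y z :
  within adj a x y -> within adj b y z -> within adj (a + b) x z.
Proof.
  intros H; revert z; induction H as [k x|k x y' y Hxy _ IH]; intros z Hyz.
  - apply within_weaken with b; [lia | exact Hyz].
  - apply within_step with y'; [exact Hxy | exact (IH z Hyz)].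
Qed.

Lemma within_sym a x y : within adj a x y -> within adj a y x.
Proof.
  induction 1 as [|k x y z Hxy _ IH].
  - apply within_refl.
  - assert (Hyx : within adj 1 y x)
      by (apply within_step with x; [apply adj_sym, Hxy | apply within_refl]).
    apply within_weaken with (k + 1); [lia | exact (within_trans _ _ _ _ _ IH Hyx)].
Qed.

Lemma within_split D x y t :
  within adj D x y -> t <= D -> exists z, within adj t x z /\ within adj (D - t) z y.
Proof.
  intros H; revert t; induction H as [k x|k x y' y Hxy Hy IH]; intros t Ht.
  - exists x; split; apply within_refl.
  - destruct t as [|t].
    + exists x; split; [apply within_refl|].
      rewrite Nat.sub_0_r; apply within_step with y'; assumption.
    + destruct (IH t) as [z [Hxz Hzy]]; [lia|].
      exists z; split; [apply within_step with y'; assumption | exact Hzy].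
Qed.

Lemma within_least k x y :
  within adj k x y ->
  exists D, within adj D x y /\ forall m, within adj m x y -> D <= m.
Proof.
  intros Hk.
  destruct (dec_inh_nat_subset_has_unique_least_element
              (fun m => within adj m x y) (fun m => classic _) (ex_intro _ k Hk))
    as [D [[HD Hleast] _]].
  exists D; split; assumption.
Qed.

Lemma geodesic_detour D s x y z a b k :
  (forall m, within adj m s x -> D <= m) -> b <= D ->
  within adj a s z -> within adj k z y -> within adj (D - b) y x -> b <= a + k.
Proof.
  intros Hleast Hb Hsz Hzy Hyx.
  pose proof (Hleast _ (within_trans _ _ _ _ _ (within_trans _ _ _ _ _ Hsz Hzy) Hyx)).
  lia.
Qed.

End Walks.

Lemma div_pow2_gap D i j : i < j -> D / 2 ^ S i + D / 2 ^ j <= D / 2 ^ i.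
Proof.
  intros Hij.
  assert (Hpow : forall n, 2 ^ n <> 0) by (intro n; apply Nat.pow_nonzero; lia).
  assert (Hj : D / 2 ^ j <= D / 2 ^ S i).
  { apply Nat.div_le_compat_l; split;
      [apply Nat.neq_0_lt_0, Hpow | apply Nat.pow_le_mono_r; lia]. }
  assert (Hhalf : 2 * (D / 2 ^ S i) <= D / 2 ^ i).
  { rewrite Nat.pow_succ_r', (Nat.mul_comm 2 (2 ^ i)), <- Nat.Div0.div_div.
    apply Nat.Div0.mul_div_le. }
  lia.
Qed.

Lemma div_pow2_le D i : D / 2 ^ i <= D.
Proof.
  apply Nat.Div0.div_le_upper_bound.
  pose proof (Nat.pow_nonzero 2 i); destruct (2 ^ i); nia.
Qed.

Lemma lt_div_pow2 k D i : (k + 1) * 2 ^ i <= D -> k < D / 2 ^ i.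
Proof.
  intros H; apply Nat.div_le_lower_bound; [apply Nat.pow_nonzero; lia | lia].
Qed.

Lemma functional_choice2 (A B C : Type) (R : A -> B -> C -> Prop) :
  (forall a b, exists c, R a b c) -> exists f : A -> B -> C, forall a b, R a b (f a b).
Proof.
  intros H.
  apply functional_choice with (R := fun a (g : B -> C) => forall b, R a b (g b)).
  intro a; exact (functional_choice _ (H a)).
Qed.

Section Galaxies.

Variables (X : Type) (adj : X -> X -> Prop) (F : (nat -> Prop) -> Prop).
Hypothesis adj_sym : forall x y, adj x y -> adj y x.
Hypothesis adj_connected : connected adj.
Hypothesis F_empty : ~ F (fun _ => False).
Hypothesis F_mono : forall A B : nat -> Prop, (forall n, A n -> B n) -> F A -> F B.
Hypothesis F_and : forall A B : nat -> Prop, F A -> F B -> F (fun n => A n /\ B n).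
Hypothesis F_ultra : forall A : nat -> Prop, F A \/ F (fun n => ~ A n).

Lemma lim_dist_sym x y : lim_dist adj F x y -> lim_dist adj F y x.
Proof.
  intros [k Hk]; exists k.
  apply F_mono with (2 := Hk); intros n; apply within_sym, adj_sym.
Qed.

Lemma not_lim_dist_far x y k :
  ~ lim_dist adj F x y -> F (fun n => ~ within adj k (x n) (y n)).
Proof.
  intros Hxy; destruct (F_ultra (fun n => within adj k (x n) (y n))) as [H|H];
    [exfalso; apply Hxy; exists k; exact H | exact H].
Qed.

Lemma distance_unlimited (s : X) (x : nat -> X) (D : nat -> nat) k :
  (forall n, within adj (D n) s (x n)) ->
  ~ lim_dist adj F x (standard s) -> F (fun n => k < D n).
Proof.
  intros HD Hfar; apply F_mono with (2 := not_lim_dist_far _ _ k Hfar); intros n Hn.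
  destruct (le_lt_dec (D n) k) as [Hle|]; [exfalso | assumption].
  apply Hn, within_sym, within_weaken with (D n); [exact adj_sym | exact Hle | apply HD].
Qed.

Lemma galaxies_along_geodesics (s : X) (x : nat -> X) :
  ~ lim_dist adj F x (standard s) -> infinitely_many_galaxies adj F.
Proof.
  intros Hfar.
  destruct (functional_choice
              (fun n D => within adj D s (x n) /\ forall m, within adj m s (x n) -> D <= m))
    as [D HD].
  { intro n; destruct (adj_connected s (x n)) as [k Hk]; exact (within_least _ _ k _ _ Hk). }
  assert (D_unlimited : forall k, F (fun n => k < D n))
    by (intro k; apply (distance_unlimited s x D); [apply HD | exact Hfar]).
  destruct (functional_choice2 _ _ _ (fun i n y => within adj (D n / 2 ^ i) s y /\
                                         within adj (D n - D n / 2 ^ i) y (x n)))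
    as [g Hg].
  { intros i n; apply within_split; [apply HD | apply div_pow2_le]. }
  assert (separated : forall i j, i < j -> ~ lim_dist adj F (g i) (g j)).
  { intros i j Hij [k Hk].
    apply F_empty, F_mono with (2 := F_and _ _ Hk (D_unlimited ((k + 1) * 2 ^ S i))).
    intros n [Hw Hbig].
    assert (Hdetour : D n / 2 ^ i <= D n / 2 ^ j + k).
    { apply (geodesic_detour X adj (D n) s (x n) (g i n) (g j n)); try apply HD.
      - apply div_pow2_le.
      - apply Hg.
      - apply within_sym; [exact adj_sym | exact Hw].
      - apply Hg. }
    pose proof (div_pow2_gap (D n) i j Hij).
    pose proof (lt_div_pow2 k (D n) (S i) (Nat.lt_le_incl _ _ Hbig)).
    lia. }
  exists g; intros i j Hij Hl.
  destruct (Nat.lt_gt_cases i j) as [[Hlt|Hgt] _]; [exact Hij|..].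
  - exact (separated i j Hlt Hl).
  - exact (separated j i Hgt (lim_dist_sym _ _ Hl)).
Qed.

End Galaxies.

Theorem mainTheorem5 (X : Type) (adj : X -> X -> Prop)
  (F : (nat -> Prop) -> Prop) :
  free_ultrafilter F ->
  is_graph adj ->
  connected adj ->
  infinite_type X ->
  only_principal_galaxy adj F \/ infinitely_many_galaxies adj F.
Proof.
  intros [_ [F_empty [F_mono [F_and [F_ultra _]]]]] [adj_sym _] adj_connected _.
  destruct (classic (only_principal_galaxy adj F)) as [Hone|Hnot]; [left; exact Hone | right].
  destruct (not_all_ex_not _ _ Hnot) as [x Hx].
  apply (galaxies_along_geodesics X adj F adj_sym adj_connected F_empty F_mono F_and F_ultra
           (x 0) x).
  intros Hlim; apply Hx; exists (x 0); exact Hlim.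
Qed.
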